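(* Let $G$ be a finite group, $\varphi,\psi\in\mathrm{Aut}(G)$, and $U,V\leq G\times G$ with $\Delta(G,\varphi)\leq U$ and $\Delta(G,\psi)\leq V$. Then (i) $k_2(U)=\varphi(k_1(U))$; (ii) $k_1(U\ast V)=k_1(U)\,\varphi^{-1}(k_1(V))$; (iii) $k_2(U\ast V)=k_2(V)\,\psi(k_2(U))$.
   Context: $\Delta(G,\varphi)=\{(g,\varphi(g)):g\in G\}$. For $W\leq G\times G$: $p_1(W)=\{g:\exists h,(g,h)\in W\}$, $p_2(W)=\{h:\exists g,(g,h)\in W\}$, $k_1(W)=\{g:(g,1)\in W\}$, $k_2(W)=\{h:(1,h)\in W\}$. The $\ast$-product of $U,V\leq G\times G$ is $U\ast V=\{(u,v)\in p_1(U)\times p_2(V):\exists x\in p_2(U)\cap p_1(V),\ (u,x)\in U,\ (x,v)\in V\}$. *)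

From mathcomp Require Import all_boot all_fingroup.
Set Implicit Arguments. Unset Strict Implicit. Unset Printing Implicit Defensive.
Import GroupScope.
Local Open Scope group_scope.

Section Defs.
Variable gT : finGroupType.

Definition Delta (G : {set gT}) (phi : {perm gT}) : {set gT * gT} :=
  [set (g, phi g) | g in G].

Definition p1 (W : {set gT * gT}) : {set gT} := [set g | [exists h, (g, h) \in W]].
Definition p2 (W : {set gT * gT}) : {set gT} := [set h | [exists g, (g, h) \in W]].
Definition k1 (W : {set gT * gT}) : {set gT} := [set g | (g, 1) \in W].
Definition k2 (W : {set gT * gT}) : {set gT} := [set h | (1, h) \in W].

Definition star (U V : {set gT * gT}) : {set gT * gT} :=
  [set uv : gT * gT | [&& uv.1 \in p1 U, uv.2 \in p2 V &
     [exists x, [&& x \in p2 U, x \in p1 V, (uv.1, x) \in U & (x, uv.2) \in V]]]].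
End Defs.

From mathcomp Require Import all_boot all_fingroup.
Import GroupScope.
Local Open Scope group_scope.

(* Everything follows from the group structure of U and V: dividing two pairs
   with the same second (first) coordinate lands in k1 (k2), and the diagonal
   Delta(G, phi) <= U supplies, for every x in G, the pairs (phi^-1 x, x) used
   to cancel the middle coordinate of an element of the *-product. *)

Lemma mem_p1p2 {gT : finGroupType} {W : {set gT * gT}} {y z : gT} :
  (y, z) \in W -> y \in p1 W /\ z \in p2 W.
Proof. by move=> yz; rewrite !inE; split; apply/existsP; [exists z | exists y]. Qed.

Lemma mem_star {gT : finGroupType} (U V : {set gT * gT}) (u v : gT) :
  ((u, v) \in star U V) = [exists x, ((u, x) \in U) && ((x, v) \in V)].
Proof.
rewrite inE /=; apply/and3P/existsP => [[_ _ /existsP[x /and4P[_ _ ux xv]]]|].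
  by exists x; rewrite ux xv.
case=> x /andP[ux xv].
have [[u1 x2] [x1 v2]] := (mem_p1p2 ux, mem_p1p2 xv).
by split=> //; apply/existsP; exists x; rewrite ux xv x1 x2.
Qed.

Lemma mem_imset_perm {gT : finGroupType} (f : {perm gT}) (A : {set gT}) x :
  (x \in f @: A) = ((f^-1)%g x \in A).
Proof. by rewrite -{1}(permKV f x) mem_imset //; apply: perm_inj. Qed.

Lemma Delta_sub_mem {gT : finGroupType} {G : {set gT}} {f : {perm gT}}
    {W : {set gT * gT}} {g : gT} :
  Delta G f \subset W -> g \in G -> (g, f g) \in W.
Proof. by move=> sDW gG; apply: (subsetP sDW); apply: imset_f. Qed.

Section KernelsOfPairGroups.

Context {gT : finGroupType} {U : {group gT * gT}}.

Lemma k1_divr {a c b : gT} : (a, b) \in U -> (c, b) \in U -> a * c^-1 \in k1 U.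
Proof. by move=> ab cb; rewrite inE -(mulgV b) (groupM ab (groupVr cb)). Qed.

Lemma k2_divr {a b c : gT} : (a, b) \in U -> (a, c) \in U -> b * c^-1 \in k2 U.
Proof. by move=> ab ac; rewrite inE -(mulgV a) (groupM ab (groupVr ac)). Qed.

Lemma k1_mull {a c b : gT} : a \in k1 U -> (c, b) \in U -> (a * c, b) \in U.
Proof. by rewrite inE => a1 cb; rewrite -(mul1g b) (groupM a1 cb). Qed.

Lemma k2_mull {b a c : gT} : b \in k2 U -> (a, c) \in U -> (a, b * c) \in U.
Proof. by rewrite inE => b1 ac; rewrite -(mul1g a) (groupM b1 ac). Qed.

End KernelsOfPairGroups.

Section DiagonalSubgroups.

Context {gT : finGroupType} {G : {group gT}} {phi psi : {perm gT}}.
Context {U V : {group gT * gT}}.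
Hypothesis phiG : phi \in Aut G.
Hypotheses (sUGG : U \subset setX G G) (sVGG : V \subset setX G G).
Hypotheses (sDU : Delta G phi \subset U) (sDV : Delta G psi \subset V).

Lemma Delta_inv_memU {x : gT} : x \in G -> ((phi^-1)%g x, x) \in U.
Proof.
move=> xG; rewrite -{2}(permKV phi x); apply: Delta_sub_mem sDU _.
by apply: Aut_closed xG; rewrite groupV.
Qed.

Lemma k2_eq_imset_k1 : k2 U = phi @: k1 U.
Proof.
apply/setP => h; rewrite mem_imset_perm; apply/idP/idP => [h1 | g1].
  rewrite inE in h1; have /setXP[_ hG] := subsetP sUGG _ h1.
  by rewrite -(mulg1 ((phi^-1)%g _)) -invg1 (k1_divr (Delta_inv_memU hG) h1).
rewrite inE in g1; have /setXP[gG _] := subsetP sUGG _ g1.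
rewrite -(permKV phi h) -(mulg1 (phi _)) -invg1.
exact: k2_divr (Delta_sub_mem sDU gG) g1.
Qed.

Lemma k1_star : k1 (star U V) = k1 U * ((phi^-1)%g @: k1 V).
Proof.
apply/setP => g; rewrite inE mem_star; apply/existsP/mulsgP.
  case=> x /andP[gx x1]; have /setXP[xG _] := subsetP sVGG _ x1.
  exists (g * ((phi^-1)%g x)^-1) ((phi^-1)%g x); last by rewrite mulgKV.
    exact: k1_divr gx (Delta_inv_memU xG).
  by apply: imset_f; rewrite inE.
case=> a y a1 /imsetP[b]; rewrite inE => b1 -> ->.
have /setXP[bG _] := subsetP sVGG _ b1.
by exists b; rewrite b1 andbT (k1_mull a1 (Delta_inv_memU bG)).
Qed.

Lemma k2_star : k2 (star U V) = k2 V * (psi @: k2 U).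
Proof.
apply/setP => h; rewrite inE mem_star; apply/existsP/mulsgP.
  case=> x /andP[x1 xh]; have /setXP[_ xG] := subsetP sUGG _ x1.
  exists (h * (psi x)^-1) (psi x); last by rewrite mulgKV.
    exact: k2_divr xh (Delta_sub_mem sDV xG).
  by apply: imset_f; rewrite inE.
case=> b y b1 /imsetP[a]; rewrite inE => a1 -> ->.
have /setXP[_ aG] := subsetP sUGG _ a1.
by exists a; rewrite a1 (k2_mull b1 (Delta_sub_mem sDV aG)).
Qed.

End DiagonalSubgroups.

Theorem lemma5p4 (gT : finGroupType) (G : {group gT}) (phi psi : {perm gT})
    (U V : {group gT * gT}) :
  phi \in Aut G -> psi \in Aut G ->
  U \subset setX G G -> V \subset setX G G ->
  Delta G phi \subset U -> Delta G psi \subset V ->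
  [/\ k2 U = phi @: k1 U,
      k1 (star U V) = k1 U * ((phi^-1)%g @: k1 V)
    & k2 (star U V) = k2 V * (psi @: k2 U)].
Proof.
(* (iii) only uses Delta(G, psi) <= V, not that psi is an automorphism. *)
move=> phiG _ sUGG sVGG sDU sDV; split.
- exact: k2_eq_imset_k1 phiG sUGG sDU.
- exact: k1_star phiG sVGG sDU.
- exact: k2_star sUGG sDV.
Qed.
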